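(* For every $\alpha$ with $5\pi/6<\alpha<2\pi$ there exist $R>0$ and a finite set $V$ of pairwise distinct points in the plane such that, when the radius levels $r_1<\dots<r_k=R$ include every pairwise distance $d(u,v)\le R$ between nodes of $V$, the graph $G_R$ is connected but $G_\alpha$ is not connected. In particular, for $\alpha>5\pi/6$, $G_\alpha$ does not in general preserve the connectivity of $G_R$.
   Context: Let $V$ be a finite set of pairwise distinct points (nodes) in the Euclidean plane, $d$ the Euclidean distance, and $R>0$. Let $G_R=(V,E)$ be the undirected graph with $E=\{\{u,v\}: u\neq v,\ d(u,v)\le R\}$. Fix a finite increasing sequence of radius levels $0<r_1<r_2<\dots<r_k=R$. For $u\in V$ and $1\le i\le k$ let $S_i(u)=\{v\in V\setminus\{u\}: d(u,v)\le r_i\}$. For $0<\alpha<2\pi$, a closed cone of width $\alpha$ with apex $u$ is a set $\{u+t(\cos\varphi,\sin\varphi): t\ge 0,\ \varphi\in[\theta-\alpha/2,\theta+\alpha/2]\}$ for some $\theta$. A finite set $S\subseteq V\setminus\{u\}$ has an $\alpha$-gap (at $u$) if some closed cone of width $\alpha$ with apex $u$ contains no node of $S$ (in particular $\emptyset$ has an $\alpha$-gap). The algorithm CBTC($\alpha$) assigns to each $u$ the index $i_u$ = the least $i\in\{1,\dots,k\}$ such that $S_i(u)$ has no $\alpha$-gap, or $i_u=k$ if there is no such $i$; set $N_\alpha(u)=S_{i_u}(u)$ and $N_\alpha=\{(u,v): v\in N_\alpha(u)\}$. Let $E_\alpha=\{\{u,v\}: (u,v)\in N_\alpha \text{ or }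 (v,u)\in N_\alpha\}$ (the symmetric closure of $N_\alpha$) and $G_\alpha=(V,E_\alpha)$. *)

From Stdlib Require Import Reals List Relations.
Import ListNotations.
Open Scope R_scope.

Definition point := (R * R)%type.

Definition edist (p q : point) : R :=
  sqrt ((fst p - fst q) ^ 2 + (snd p - snd q) ^ 2).

Definition in_cone (u : point) (theta alpha : R) (v : point) : Prop :=
  exists t phi, 0 <= t /\ theta - alpha / 2 <= phi <= theta + alpha / 2 /\
    v = (fst u + t * cos phi, snd u + t * sin phi).

Definition has_gap (alpha : R) (u : point) (S : point -> Prop) : Prop :=
  exists theta, forall v, S v -> ~ in_cone u theta alpha v.

Definition ball_nbrs (V : list point) (r : R) (u : point) (v : point) : Prop :=
  In v V /\ v <> u /\ edist u v <= r.

(* radius levels r_1 < ... < r_k = Rad, stored as list rs with r_{i+1} = nth i rs 0 *)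
Definition radius_levels (rs : list R) (Rad : R) : Prop :=
  rs <> [] /\ 0 < nth 0 rs 0 /\
  (forall i, (S i < length rs)%nat -> nth i rs 0 < nth (S i) rs 0) /\
  nth (length rs - 1) rs 0 = Rad.

Definition cbtc_index (V : list point) (rs : list R) (alpha : R) (u : point) (i : nat) : Prop :=
  (i < length rs)%nat /\
  ( (~ has_gap alpha u (ball_nbrs V (nth i rs 0) u) /\
      forall j, (j < i)%nat -> has_gap alpha u (ball_nbrs V (nth j rs 0) u))
  \/ ((forall j, (j < length rs)%nat -> has_gap alpha u (ball_nbrs V (nth j rs 0) u)) /\
      i = (length rs - 1)%nat) ).

Definition N_alpha (V : list point) (rs : list R) (alpha : R) (u v : point) : Prop :=
  In u V /\ exists i, cbtc_index V rs alpha u i /\ ball_nbrs V (nth i rs 0) u v.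

Definition E_alpha (V : list point) (rs : list R) (alpha : R) (u v : point) : Prop :=
  N_alpha V rs alpha u v \/ N_alpha V rs alpha v u.

Definition E_R (V : list point) (Rad : R) (u v : point) : Prop :=
  In u V /\ In v V /\ u <> v /\ edist u v <= Rad.

Definition connected_on (V : list point) (E : point -> point -> Prop) : Prop :=
  forall u v, In u V -> In v V -> clos_refl_trans point E u v.

From Stdlib Require Import Reals List Relations Lra Lia ZArith Psatz.
Import ListNotations.
Open Scope R_scope.

(* Two four-node stars are placed point-symmetrically, their hubs at distance
   [R = 1].  Each hub has spokes of length < 1 in the directions psi, -pi/2 and pi
   (turned by pi for the second star), where psi = alpha/2 - pi/12; the widest
   angular gap between them is psi + pi/2 = alpha/2 + 5pi/12, which is at most
   alpha exactly when alpha >= 5pi/6.  So CBTC stops at the spoke length at both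
   hubs and drops the hub-to-hub edge, the only pair of nodes from different stars
   within distance 1; in G_R that edge connects the two stars. *)

Definition ray (u : point) (d t : R) : point :=
  (fst u + t * cos d, snd u + t * sin d).

Lemma edist_sym p q : edist p q = edist q p.
Proof. unfold edist. f_equal. ring. Qed.

Lemma edist_eq_of_sq p q d :
  0 <= d -> (fst p - fst q) ^ 2 + (snd p - snd q) ^ 2 = d ^ 2 -> edist p q = d.
Proof. intros Hd Hsq. unfold edist. rewrite Hsq. now apply sqrt_pow2. Qed.

Lemma edist_gt_of_sq p q d :
  0 <= d -> d ^ 2 < (fst p - fst q) ^ 2 + (snd p - snd q) ^ 2 -> d < edist p q.
Proof.
intros Hd Hsq. unfold edist. rewrite <- (sqrt_pow2 d Hd).
apply sqrt_lt_1_alt. split; [nra | exact Hsq].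
Qed.

Lemma edist_ray u d t : 0 <= t -> edist u (ray u d t) = t.
Proof.
intros Ht. apply edist_eq_of_sq; [exact Ht |]. simpl.
pose proof (sin2_cos2 d) as Hpyth. unfold Rsqr in Hpyth. nra.
Qed.

Lemma ray_neq u d t : 0 < t -> ray u d t <> u.
Proof.
intros Ht Heq. pose proof (edist_ray u d t (Rlt_le _ _ Ht)) as Hd.
rewrite Heq in Hd. unfold edist in Hd.
replace ((fst u - fst u) ^ 2 + (snd u - snd u) ^ 2) with 0 in Hd by ring.
rewrite sqrt_0 in Hd. lra.
Qed.

Lemma ray_period u d t (k : Z) : ray u (d + 2 * IZR k * PI) t = ray u d t.
Proof.
assert (Hnat : forall x (n : nat), ray u (x + 2 * IZR (Z.of_nat n) * PI) t = ray u x t).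
{ intros x n. unfold ray. rewrite <- INR_IZR_INZ, cos_period, sin_period. reflexivity. }
destruct (Z_le_gt_dec 0 k) as [Hk | Hk].
- rewrite <- (Z2Nat.id k Hk). apply Hnat.
- replace k with (- Z.of_nat (Z.to_nat (- k)))%Z by lia.
  set (n := Z.to_nat (- k)). rewrite opp_IZR.
  rewrite <- (Hnat (d + 2 * - IZR (Z.of_nat n) * PI) n). f_equal. ring.
Qed.

Lemma angle_reduction lo x : exists k : Z, lo <= x + 2 * IZR k * PI < lo + 2 * PI.
Proof.
pose proof PI_RGT_0 as HPI.
set (y := (x - lo) / (2 * PI)).
destruct (base_Int_part y) as [Hfloor Hceil].
exists (- Int_part y)%Z. rewrite opp_IZR.
assert (Hy : x - lo = y * (2 * PI)) by (unfold y; field; lra).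
split; nra.
Qed.

Lemma in_cone_ray u theta alpha d t (k : Z) : 0 <= t ->
  theta - alpha / 2 <= d + 2 * IZR k * PI <= theta + alpha / 2 ->
  in_cone u theta alpha (ray u d t).
Proof.
intros Ht Hwin. exists t, (d + 2 * IZR k * PI).
repeat split; try tauto. now rewrite <- (ray_period u d t k).
Qed.

Lemma no_gap_three_rays alpha u (S : point -> Prop) a b c ta tb tc :
  b - a <= alpha -> c - b <= alpha -> a + 2 * PI - c <= alpha ->
  0 <= ta -> 0 <= tb -> 0 <= tc ->
  S (ray u a ta) -> S (ray u b tb) -> S (ray u c tc) -> ~ has_gap alpha u S.
Proof.
(* Normalise the cone's start angle [y] into [a - alpha, a - alpha + 2 pi): the
   cone then contains [a] if [y <= a], else [b] if [y <= b], else [c]. *)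
intros Hab Hbc Hca Hta Htb Htc Sa Sb Sc [theta Hgap].
destruct (angle_reduction (a - alpha) (theta - alpha / 2)) as [k Hk].
set (y := theta - alpha / 2 + 2 * IZR k * PI) in Hk.
assert (Hwin : forall d t, 0 <= t -> S (ray u d t) -> y <= d <= y + alpha -> False).
{ intros d t Ht Sd Hd. apply (Hgap _ Sd). apply in_cone_ray with (k := (- k)%Z); [exact Ht |].
  rewrite opp_IZR. unfold y in Hd. lra. }
destruct (Rle_lt_dec y a); [apply (Hwin a ta); auto; lra |].
destruct (Rle_lt_dec y b); [apply (Hwin b tb); auto; lra |].
destruct (Rle_lt_dec y c); [apply (Hwin c tc); auto; lra |].
lra.
Qed.

Lemma radius_levels_mono rs Rad : radius_levels rs Rad ->
  forall i j, (i <= j)%nat -> (j < length rs)%nat -> nth i rs 0 <= nth j rs 0.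
Proof.
intros [_ [_ [Hinc _]]] i j. induction j as [| j IH]; intros Hij Hj.
- replace i with 0%nat by lia. lra.
- destruct (Nat.eq_dec i (S j)) as [-> | Hne]; [lra |].
  specialize (IH ltac:(lia) ltac:(lia)). specialize (Hinc j Hj). lra.
Qed.

Lemma radius_levels_le_Rad rs Rad : radius_levels rs Rad ->
  forall i, (i < length rs)%nat -> nth i rs 0 <= Rad.
Proof.
intros HR i Hi. pose proof HR as [_ [_ [_ Hlast]]]. rewrite <- Hlast.
apply (radius_levels_mono rs Rad HR); lia.
Qed.

Lemma N_alpha_in V rs alpha u v : N_alpha V rs alpha u v -> In u V /\ In v V.
Proof. intros [Hu [_ [_ [Hv _]]]]. auto. Qed.

Lemma N_alpha_edist_le_Rad V rs Rad alpha u v :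
  radius_levels rs Rad -> N_alpha V rs alpha u v -> edist u v <= Rad.
Proof.
intros HR [_ [i [[Hi _] [_ [_ Hd]]]]].
pose proof (radius_levels_le_Rad rs Rad HR i Hi). lra.
Qed.

(* CBTC stops at the first level without a gap, so it never looks beyond [r]. *)
Lemma N_alpha_edist_le_no_gap V rs Rad alpha u v r :
  radius_levels rs Rad -> In r rs -> ~ has_gap alpha u (ball_nbrs V r u) ->
  N_alpha V rs alpha u v -> edist u v <= r.
Proof.
intros HR Hr Hnogap [_ [i [[Hi Hchoice] [_ [_ Hd]]]]].
destruct (In_nth rs r 0 Hr) as [j [Hj <-]].
destruct Hchoice as [[_ Hbefore] | [Hall _]].
- destruct (Nat.lt_ge_cases j i) as [Hji | Hij].
  + contradiction (Hnogap (Hbefore j Hji)).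
  + pose proof (radius_levels_mono rs Rad HR i j Hij Hj). lra.
- contradiction (Hnogap (Hall j Hj)).
Qed.

Lemma clos_refl_trans_sym {A} (E : relation A) : symmetric A E ->
  forall a b, clos_refl_trans A E a b -> clos_refl_trans A E b a.
Proof.
intros Hsym a b Hab. induction Hab.
- now apply rt_step, Hsym.
- apply rt_refl.
- eapply rt_trans; eauto.
Qed.

Lemma clos_refl_trans_invariant {A} (E : relation A) (P : A -> Prop) :
  (forall a b, P a -> E a b -> P b) ->
  forall a b, clos_refl_trans A E a b -> P a -> P b.
Proof. intros Hstep a b Hab. induction Hab; eauto. Qed.

Lemma connected_on_of_hub V E h : symmetric point E ->
  (forall x, In x V -> clos_refl_trans point E h x) -> connected_on V E.
Proof.
intros Hsym Hhub u v Hu Hv. apply rt_trans with h.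
- now apply clos_refl_trans_sym, Hhub.
- now apply Hhub.
Qed.

Lemma E_R_sym V Rad : symmetric point (E_R V Rad).
Proof. intros a b [Ha [Hb [Hab Hd]]]. rewrite edist_sym in Hd. repeat split; auto. Qed.

Lemma point_eq_dec (p q : point) : {p = q} + {p <> q}.
Proof. decide equality; apply Req_dec_T. Qed.

Lemma E_R_reach V Rad x y : In x V -> In y V -> edist x y <= Rad ->
  clos_refl_trans point (E_R V Rad) x y.
Proof.
intros Hx Hy Hd. destruct (point_eq_dec x y) as [<- | Hxy].
- apply rt_refl.
- now apply rt_step.
Qed.

Section Two_stars.

Variable psi : R.
Hypothesis psi_range : PI / 3 < psi < PI.

(* Any [star_long] in (max 0 (2 cos psi), 1) works; [star_short] is chosen so small
   that the short spoke at one hub stays more than 1 away from the other star. *)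
Definition star_long := 3 / 4 + cos psi / 2.
Definition star_short := star_long * (star_long - 2 * cos psi) / 4.

Definition star (h : point) (beta : R) : list point :=
  [h; ray h (beta + psi) star_long; ray h (beta - PI / 2) star_short;
   ray h (beta + PI) star_long].

Definition left_star := star (0, 0) 0.
Definition right_star := star (1, 0) PI.
Definition star_nodes := left_star ++ right_star.

Lemma star_params :
  -1 <= cos psi < 1 / 2 /\ 0 < sin psi <= 1 /\
  cos psi * cos psi + sin psi * sin psi = 1 /\
  0 < star_short < star_long /\ star_long < 1 /\ 2 * cos psi < star_long.
Proof.
pose proof PI_RGT_0 as HPI.
assert (Hc : cos psi < 1 / 2) by (rewrite <- cos_PI3; apply cos_decreasing_1; lra).
assert (Hs : 0 < sin psi) by (apply sin_gt_0; lra).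
pose proof (COS_bound psi). pose proof (SIN_bound psi).
pose proof (sin2_cos2 psi) as Hpyth. unfold Rsqr in Hpyth.
unfold star_short, star_long.
assert (0 < 3 / 4 + cos psi / 2 - 2 * cos psi) by lra.
repeat split; try lra; nra.
Qed.

Lemma left_star_coords :
  left_star = [(0, 0); (star_long * cos psi, star_long * sin psi);
               (0, - star_short); (- star_long, 0)].
Proof.
unfold left_star, star, ray; simpl.
replace (0 + psi) with psi by ring.
replace (0 - PI / 2) with (- (PI / 2)) by ring.
replace (0 + PI) with PI by ring.
rewrite cos_neg, sin_neg, cos_PI2, sin_PI2, cos_PI, sin_PI.
repeat first [ring | f_equal].
Qed.

Lemma right_star_coords :
  right_star = [(1, 0); (1 - star_long * cos psi, - (star_long * sin psi));
                (1, star_short); (1 + star_long, 0)].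
Proof.
unfold right_star, star, ray; simpl.
replace (PI + psi) with (psi + PI) by ring.
replace (PI - PI / 2) with (PI / 2) by field.
replace (PI + PI) with (2 * PI) by ring.
rewrite neg_cos, neg_sin, cos_PI2, sin_PI2, cos_2PI, sin_2PI.
repeat first [ring | f_equal].
Qed.

Lemma star_edist_hub h beta x : In x (star h beta) -> edist h x <= star_long.
Proof.
pose proof star_params as (_ & _ & _ & Hshort & _).
intros [<- | [<- | [<- | [<- | []]]]]; try (rewrite edist_ray; lra).
rewrite (edist_eq_of_sq h h 0); [lra | lra | ring].
Qed.

Lemma star_hub_no_gap V h beta alpha :
  psi + PI / 2 <= alpha -> PI - psi <= alpha -> PI / 2 <= alpha ->
  incl (star h beta) V -> ~ has_gap alpha h (ball_nbrs V star_long h).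
Proof.
intros Hgap1 Hgap2 Hgap3 Hincl.
pose proof star_params as (_ & _ & _ & Hshort & _).
assert (Hspoke : forall d t, 0 < t <= star_long -> In (ray h d t) (star h beta) ->
                   ball_nbrs V star_long h (ray h d t)).
{ intros d t Ht Hin. repeat split.
  - now apply Hincl.
  - apply ray_neq. lra.
  - rewrite edist_ray; lra. }
apply (no_gap_three_rays alpha h _ (beta - PI / 2) (beta + psi) (beta + PI)
         star_short star_long star_long); try lra;
  apply Hspoke; simpl; tauto || lra.
Qed.

Lemma star_cross_far x y : In x left_star -> In y right_star ->
  (x = (0, 0) /\ y = (1, 0)) \/ 1 < edist x y.
Proof.
pose proof star_params as ([Hc1 Hc2] & [Hs1 Hs2] & Hpyth & [Hshort1 Hshort2] & Hlong & Hlong2c).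
rewrite left_star_coords, right_star_coords. unfold star_short in *.
set (c := cos psi) in *. set (sn := sin psi) in *. set (r := star_long) in *.
set (g := r - 2 * c) in *.
assert (Hg : 0 < g) by (unfold g; lra).
assert (Hr : 0 < r) by lra.
assert (r * r - 2 * r * c = r * g) by (unfold g; ring).
assert (Hrg : 0 < r * g) by nra.
assert (0 < r * (r * g / 4)) by nra.
assert (r * (r * g / 4) * sn <= r * (r * g / 4)) by nra.
assert (r * (r * g) < r * g) by nra.
assert (r * c < 1 / 2) by (destruct (Rle_lt_dec 0 c); nra).
assert ((r * c) ^ 2 + (r * sn) ^ 2 = r * r) by nra.
intros Hx Hy.
destruct Hx as [<- | [<- | [<- | [<- | []]]]];
  destruct Hy as [<- | [<- | [<- | [<- | []]]]];
  try (left; split; reflexivity);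
  right; apply edist_gt_of_sq; simpl; fold g; nra.
Qed.

Lemma star_nodes_nodup : NoDup star_nodes.
Proof.
pose proof star_params as (Hc & Hs & Hpyth & Hshort & Hlong & Hlong2c).
unfold star_nodes. rewrite left_star_coords, right_star_coords. simpl.
repeat constructor; simpl; intro Hin; repeat destruct Hin as [Hin | Hin];
  try contradiction; injection Hin; intros; nra.
Qed.

Lemma star_nodes_connected : connected_on star_nodes (E_R star_nodes 1).
Proof.
pose proof star_params as (_ & _ & _ & _ & Hlong & _).
assert (Hhubs : edist (0, 0) (1, 0) = 1) by (apply edist_eq_of_sq; simpl; lra).
assert (Hleft : In (0, 0) star_nodes) by (simpl; tauto).
assert (Hright : In (1, 0) star_nodes) by (apply in_or_app; right; simpl; tauto).
apply connected_on_of_hub with (0, 0); [apply E_R_sym |].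
intros x Hx. pose proof Hx as Hsplit. apply in_app_or in Hsplit as [Hx' | Hx'].
- apply E_R_reach; auto. pose proof (star_edist_hub _ _ _ Hx'). lra.
- apply rt_trans with (1, 0); apply E_R_reach; auto; try lra.
  pose proof (star_edist_hub _ _ _ Hx'). lra.
Qed.

Lemma star_nodes_not_connected alpha rs :
  psi + PI / 2 <= alpha -> PI - psi <= alpha -> PI / 2 <= alpha ->
  radius_levels rs 1 -> In star_long rs ->
  ~ connected_on star_nodes (E_alpha star_nodes rs alpha).
Proof.
intros Hgap1 Hgap2 Hgap3 HR Hlevel.
pose proof star_params as (_ & [Hs _] & _ & [Hshort Hshort_long] & Hlong & _).
assert (Hhubs : edist (0, 0) (1, 0) = 1) by (apply edist_eq_of_sq; simpl; lra).
assert (Hnogap_left : ~ has_gap alpha (0, 0) (ball_nbrs star_nodes star_long (0, 0))).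
{ apply (star_hub_no_gap _ _ 0); auto. intros x Hx. apply in_or_app. now left. }
assert (Hnogap_right : ~ has_gap alpha (1, 0) (ball_nbrs star_nodes star_long (1, 0))).
{ apply (star_hub_no_gap _ _ PI); auto. intros x Hx. apply in_or_app. now right. }
assert (Hno_cross : forall x y, In x left_star -> In y right_star ->
          ~ N_alpha star_nodes rs alpha x y /\ ~ N_alpha star_nodes rs alpha y x).
{ intros x y Hx Hy. destruct (star_cross_far x y Hx Hy) as [[-> ->] | Hfar];
    split; intro HN.
  - apply (N_alpha_edist_le_no_gap _ _ _ _ _ _ _ HR Hlevel Hnogap_left) in HN. lra.
  - apply (N_alpha_edist_le_no_gap _ _ _ _ _ _ _ HR Hlevel Hnogap_right) in HN.
    rewrite edist_sym in HN. lra.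
  - apply (N_alpha_edist_le_Rad _ _ _ _ _ _ HR) in HN. lra.
  - apply (N_alpha_edist_le_Rad _ _ _ _ _ _ HR) in HN. rewrite edist_sym in HN. lra. }
assert (Hclosed : forall a b, In a left_star ->
          E_alpha star_nodes rs alpha a b -> In b left_star).
{ intros a b Ha Hab.
  assert (Hb : In b star_nodes) by (destruct Hab as [HN | HN]; apply N_alpha_in in HN; tauto).
  apply in_app_or in Hb as [Hb | Hb]; [exact Hb |].
  destruct (Hno_cross a b Ha Hb). destruct Hab; contradiction. }
intros Hconn.
assert (Hright : In (1, 0) left_star).
{ apply (clos_refl_trans_invariant _ _ Hclosed (0, 0)); [| simpl; tauto].
  apply Hconn; [simpl; tauto | apply in_or_app; right; simpl; tauto]. }
rewrite left_star_coords in Hright.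
repeat destruct Hright as [Hright | Hright]; try contradiction;
  injection Hright; intros; nra.
Qed.

End Two_stars.

Theorem theorem2 :
  forall alpha : R, 5 * PI / 6 < alpha < 2 * PI ->
  exists (Rad : R) (V : list point),
    0 < Rad /\ NoDup V /\
    forall rs : list R,
      radius_levels rs Rad ->
      (forall u v, In u V -> In v V -> u <> v -> edist u v <= Rad -> In (edist u v) rs) ->
      connected_on V (E_R V Rad) /\ ~ connected_on V (E_alpha V rs alpha).
Proof.
intros alpha Halpha. pose proof PI_RGT_0 as HPI.
set (psi := alpha / 2 - PI / 12).
assert (Hpsi : PI / 3 < psi < PI) by (unfold psi; lra).
pose proof (star_params psi Hpsi) as (_ & _ & _ & Hshort & Hlong & _).
exists 1, (star_nodes psi). split; [lra | split; [now apply star_nodes_nodup |]].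
intros rs HR Hdists. split; [now apply star_nodes_connected |].
apply star_nodes_not_connected; auto; try (unfold psi; lra).
rewrite <- (edist_ray (0, 0) (0 + psi) (star_long psi)) by lra.
apply Hdists; [simpl; tauto | simpl; tauto | apply not_eq_sym, ray_neq; lra |].
rewrite edist_ray; lra.
Qed.
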